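(* Let $n$ be a positive integer and $w_1\le\dots\le w_m$ a feasible partition of $n$ with partial sums $R_i=w_1+\dots+w_i$, $R_0=0$. Then for every $1\le i\le m$, $R_{i-1} \ge \frac{R_i-1}{3}$.
   Context: A weighing partition of a positive integer $n$ is a multiset of positive integers summing to $n$ such that every integer $\ell$ with $1\le\ell\le n$ is a sum $\sum_j u_jw_j$ with $u_j\in\{-1,0,1\}$. A feasible partition of $n$ is a weighing partition of $n$ whose number of parts $m$ is minimal among all weighing partitions of $n$, written $w_1\le\dots\le w_m$. *)

From mathcomp Require Import all_boot all_order all_algebra.
Set Implicit Arguments. Unset Strict Implicit. Unset Printing Implicit Defensive.
Import Order.TTheory GRing.Theory Num.Theory.

(* A multiset of positive integers is represented by a sequence of nats
   (order irrelevant for the definitions below). *)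

Definition signed_representable (w : seq nat) (l : nat) : Prop :=
  exists u : nat -> int,
    (forall j, (j < size w)%N -> u j \in [:: (-1)%R; 0%R; 1%R]) /\
    (\sum_(j < size w) u j * Posz (nth 0%N w j))%R = Posz l.

Definition weighing_partition (n : nat) (w : seq nat) : Prop :=
  all (fun x => 0 < x)%N w /\ sumn w = n /\
  (forall l, (1 <= l <= n)%N -> signed_representable w l).

Definition feasible_partition (n : nat) (w : seq nat) : Prop :=
  weighing_partition n w /\
  (forall v, weighing_partition n v -> (size w <= size v)%N).

Definition R (w : seq nat) (i : nat) : nat := sumn (take i w).

(* If the part w_(k+1) exceeded 2 R_k + 1, the weight l = n - 2 R_k - 1 could
   not be weighed: a signed sum that puts some part w_j with j > k on the
   left pan (or off the scale) loses at least w_j >= w_(k+1) > 2 R_k + 1,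
   while one that puts all those parts on the right pan loses at most 2 R_k.
   Hence w_(k+1) <= 2 R_k + 1, i.e. R_(k+1) <= 3 R_k + 1. *)

From mathcomp Require Import all_boot all_order all_algebra.
From mathcomp Require Import zify.
Import Order.TTheory GRing.Theory Num.Theory.

Set Implicit Arguments. Unset Strict Implicit. Unset Printing Implicit Defensive.

Local Open Scope ring_scope.

Definition signed_sum (w : seq nat) (u : nat -> int) : int :=
  \sum_(j < size w) u j * (nth 0%N w j)%:Z.

Definition sign_vector (w : seq nat) (u : nat -> int) : Prop :=
  forall j, (j < size w)%N -> u j \in [:: -1; 0; 1].

Lemma Posz_sum (I : finType) (F : I -> nat) :
  (\sum_(j : I) F j)%N%:Z = \sum_(j : I) (F j)%:Z.
Proof. exact: (big_morph Posz PoszD (erefl _)). Qed.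

Lemma sumn_take_nth (w : seq nat) (k : nat) :
  (\sum_(j < size w) (if (j < k)%N then nth 0 w j else 0))%N = sumn (take k w).
Proof.
elim: w k => [|x w IHw] [|k] /=; rewrite ?big_ord0 // big_ord_recl /=.
  by rewrite big1.
by rewrite IHw.
Qed.

Lemma sumn_nth (w : seq nat) : (\sum_(j < size w) nth 0 w j)%N = sumn w.
Proof.
rewrite -(take_size w) -(sumn_take_nth w (size w)) take_size.
by apply: eq_bigr => j _; rewrite ltn_ord.
Qed.

Lemma signed_sum_le_sumn_sub (w : seq nat) (u : nat -> int) (j0 : 'I_(size w)) :
  sign_vector w u -> u j0 != 1 ->
  signed_sum w u <= (sumn w)%:Z - (nth 0%N w j0)%:Z.
Proof.
move=> signs uj0.
have term_le (j : 'I_(size w)) : u j * (nth 0%N w j)%:Z <= (nth 0%N w j)%:Z.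
  by have := signs j (ltn_ord j); rewrite !inE => /or3P[] /eqP->; lia.
have term_j0 : u j0 * (nth 0%N w j0)%:Z <= 0.
  by move: uj0; have := signs j0 (ltn_ord j0); rewrite !inE => /or3P[] /eqP->; lia.
rewrite /signed_sum -sumn_nth Posz_sum (bigD1 j0) //= [X in _ <= X - _](bigD1 j0) //=.
rewrite addrAC subrr add0r -[X in _ <= X]add0r.
by apply: lerD term_j0 _; apply: ler_sum => j _.
Qed.

Lemma sumn_sub_prefix_le_signed_sum (w : seq nat) (u : nat -> int) (k : nat) :
  sign_vector w u -> (forall j, (k <= j < size w)%N -> u j = 1) ->
  (sumn w)%:Z - 2 * (R w k)%:Z <= signed_sum w u.
Proof.
move=> signs u_suffix.
rewrite /signed_sum /R -sumn_nth -sumn_take_nth !Posz_sum mulr_sumr -sumrB.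
apply: ler_sum => j _; case: ltnP => jk.
  by have := signs j (ltn_ord j); rewrite !inE => /or3P[] /eqP->; lia.
by rewrite u_suffix ?jk //=; lia.
Qed.

Lemma weighing_partition_nth_le (n : nat) (w : seq nat) (k : nat) :
  weighing_partition n w -> sorted leq w -> (k < size w)%N ->
  (nth 0 w k <= 2 * R w k + 1)%N.
Proof.
move=> [_ [sumw weigh]] sorted_w ksize; rewrite leqNgt; apply/negP => big_part.
have prefix_le : (R w k + nth 0 w k <= n)%N.
  rewrite -sumw -[in X in (_ <= X)%N](cat_take_drop k w) sumn_cat.
  rewrite (drop_nth 0 ksize) /= addnA.
  exact: leq_addr.
have [u [signs represent]] : signed_representable w (n - 2 * R w k - 1).
  by apply: weigh; lia.
case: (boolP [exists j : 'I_(size w), (k <= j)%N && (u j != 1)]).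
  move=> /existsP[j0 /andP[kj0 uj0]].
  have part_le : (nth 0 w k <= nth 0 w j0)%N.
    by apply: (sorted_leq_nth leq_trans leqnn) => //; rewrite inE.
  have := signed_sum_le_sumn_sub signs uj0.
  by rewrite /signed_sum represent sumw; lia.
rewrite negb_exists => /forallP u_suffix.
have u_one (j : nat) : (k <= j < size w)%N -> u j = 1.
  by move=> /andP[kj jsize]; have := u_suffix (Ordinal jsize); rewrite kj negbK => /eqP.
have := sumn_sub_prefix_le_signed_sum signs u_one.
by rewrite /signed_sum represent sumw; lia.
Qed.

Theorem mainTheorem7 (n : nat) (w : seq nat) :
  (0 < n)%N -> feasible_partition n w -> sorted leq w ->
  forall i : nat, (1 <= i <= size w)%N ->
    (R w i <= 3 * R w i.-1 + 1)%N.
Proof.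
move=> _ [weighing _] sorted_w [|k] // /andP[_ ksize] /=.
have R_succ : R w k.+1 = (R w k + nth 0 w k)%N.
  by rewrite /R (take_nth 0 ksize) -cats1 sumn_cat /= addn0.
have := weighing_partition_nth_le weighing sorted_w ksize.
by rewrite R_succ; lia.
Qed.
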